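(* Let $S$ be a connected shape in the triangular grid with at least two points, and let $v \in S$. Then $v$ is erodable with respect to $S$ if and only if $v$ has exactly one local boundary $B$ in $S$ and $B$ is a local outer boundary.
   Context: The triangular grid $G$ has as vertices (''points'') the points of the regular triangular lattice in the plane, two points adjacent iff at unit distance; each point has six incident edges, cyclically ordered clockwise. A shape is a finite set of points, identified with its induced subgraph. A connected shape $S$ partitions the plane into faces; the unique unbounded one is the outer face, and a bounded face containing a grid point not in $S$ is a hole. The outer boundary of $S$ is the set of points of $S$ lying on the boundary of the outer face. A boundary point of $S$ is a point of $S$ adjacent to some point not in $S$. For a boundary point $v$, a local boundary of $v$ (w.r.t. $S$) is a maximal clockwise cyclic interval of consecutive edges incident to $v$ whose other endpoints are not in $S$; it is a local outer boundary if these other endpoints lie in the outer face of $S$. A point $v \in S$ is redundant if the subgraph induced by the neighbors of $v$ in $S$ is connected (i.e., removing $v$ does not disconnect its 1-hop neighborhood in $S$). A point is erodable w.r.t. $S$ if it is redundant and lies on the outer boundary of $S$. *)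

From mathcomp Require Import all_boot all_algebra.
From mathcomp Require Import finmap.
Set Implicit Arguments. Unset Strict Implicit. Unset Printing Implicit Defensive.
Import GRing.Theory Num.Theory.
Local Open Scope fset_scope.

(* Points of the triangular lattice in axial coordinates:
   (a, b) denotes a * e1 + b * e2 with e1 = (1,0), e2 = (1/2, sqrt3/2). *)
Definition point := (int * int)%type.

(* The six unit directions, listed in CLOCKWISE cyclic order
   (0deg, -60deg, -120deg, 180deg, 120deg, 60deg). *)
Definition dir (d : 'I_6) : point :=
  match val d with
  | 0 => (Posz 1, Posz 0)
  | 1 => (Posz 1, (- Posz 1)%R)
  | 2 => (Posz 0, (- Posz 1)%R)
  | 3 => ((- Posz 1)%R, Posz 0)
  | 4 => ((- Posz 1)%R, Posz 1)
  | _ => (Posz 0, Posz 1)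
  end.

Definition nb (p : point) (d : 'I_6) : point :=
  ((p.1 + (dir d).1)%R, (p.2 + (dir d).2)%R).

Definition adj (p q : point) : bool := [exists d : 'I_6, q == nb p d].

Definition gpath (P : pred point) (x y : point) : Prop :=
  exists s : seq point, [/\ path adj x s, last x s = y & all P (x :: s)].

Definition connected_set (A : {fset point}) : Prop :=
  forall x y, x \in A -> y \in A -> gpath (fun z => z \in A) x y.

(* A grid point q not in S lies in the outer (unbounded) face of S:
   it is joined, avoiding S, to grid points arbitrarily far away. *)
Definition in_outer_face (S : {fset point}) (q : point) : Prop :=
  q \notin S /\
  forall N : nat, exists r : point,
    (N < `|r.1|%N + `|r.2|%N)%N /\ gpath (fun z => z \notin S) q r.

Definition on_outer_boundary (S : {fset point}) (v : point) : Prop :=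
  v \in S /\ exists d : 'I_6, in_outer_face S (nb v d).

Definition nbhd (S : {fset point}) (v : point) : {fset point} :=
  [fset q in S | adj v q].

Definition redundant (S : {fset point}) (v : point) : Prop :=
  v \in S /\ connected_set (nbhd S v).

Definition erodable (S : {fset point}) (v : point) : Prop :=
  redundant S v /\ on_outer_boundary S v.

(* cyclic intervals of consecutive (clockwise) edge indices:
   {i, i+1, ..., i+k-1} mod 6 with 1 <= k <= 6 *)
Definition cyc_interval (B : {set 'I_6}) : Prop :=
  exists (i : 'I_6) (k : nat),
    (0 < k <= 6)%N /\ B = [set j : 'I_6 | ((j + 6 - i) %% 6 < k)%N].

Definition free_dirs (S : {fset point}) (v : point) (B : {set 'I_6}) : Prop :=
  forall d, d \in B -> nb v d \notin S.

Definition local_boundary (S : {fset point}) (v : point) (B : {set 'I_6}) : Prop :=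
  [/\ cyc_interval B, free_dirs S v B &
      forall B', cyc_interval B' -> B \subset B' -> free_dirs S v B' -> B' = B].

Definition local_outer_boundary (S : {fset point}) (v : point) (B : {set 'I_6}) : Prop :=
  local_boundary S v B /\ forall d, d \in B -> in_outer_face S (nb v d).

From mathcomp Require Import all_boot all_algebra finmap.
From Stdlib Require Import FunctionalExtensionality.
Set Implicit Arguments. Unset Strict Implicit. Unset Printing Implicit Defensive.
Import GRing.Theory.
Local Open Scope fset_scope.

(* The six neighbours of v, read clockwise, give an occupancy pattern on the
   directions ['I_6], and two neighbours of v are adjacent exactly when their
   directions are cyclically consecutive.  Hence the neighbours of v in S induce
   a connected graph iff the occupied directions form one cyclic arc, i.e. iff
   the free directions form a single proper arc; that arc is then the only local
   boundary, whereas several free arcs are several local boundaries.  Consecutive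
   free neighbours are adjacent, so if one neighbour along a free arc lies in the
   outer face, all of them do.  As S is connected with at least two points, v has
   an occupied neighbour; the finite combinatorics of the remaining patterns is
   checked by computation. *)

(* Unlike [enum 'I_6], whose [insub] goes through the opaque [idP], this
   enumeration reduces under [vm_compute]. *)
Definition dirs : seq 'I_6 := map inZp (iota 0 6).

Lemma mem_dirs (d : 'I_6) : d \in dirs.
Proof. by rewrite -[d]valZpK; apply: map_f; rewrite mem_iota ltn_ord. Qed.

Lemma dirs_allP (P : pred 'I_6) : reflect (forall d, P d) (all P dirs).
Proof. by apply: (iffP allP) => [H d | H d _]; [apply: H; apply: mem_dirs | apply: H]. Qed.

Lemma dirs_hasP (P : pred 'I_6) : reflect (exists d, P d) (has P dirs).
Proof.
by apply: (iffP hasP) => [[d _ Pd] | [d Pd]]; exists d => //; apply: mem_dirs.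
Qed.

Lemma pred6_ind (P : pred 'I_6 -> Prop) :
  (forall b0 b1 b2 b3 b4 b5, P (fun d => nth false [:: b0; b1; b2; b3; b4; b5] d)) ->
  forall o, P o.
Proof.
move=> H o; have -> : o = (fun d => nth false (map o dirs) d).
  apply: functional_extensionality => d.
  by rewrite (nth_map d) ?(nth_map 0%N) ?nth_iota ?valZpK // size_map size_iota.
exact: H.
Qed.

Definition arc (i : 'I_6) (k : nat) : pred 'I_6 := fun j => (j + 6 - i) %% 6 < k.

Lemma arcE i k j : arc i k j = (val (j - i)%R < k).
Proof. by rewrite /arc /= modnDmr addnBA // ltnW. Qed.

Lemma arc_addr i k (t : 'I_6) : arc i k (i + t)%R = (t < k).
Proof. by rewrite arcE (addrC i) addrK. Qed.

Lemma arc_start i k : arc i k i = (0 < k).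
Proof. by rewrite arcE subrr. Qed.

Lemma arc_ind (P : 'I_6 -> Prop) i k :
  (forall d, arc i k d -> arc i k (d + 1)%R -> P d <-> P (d + 1)%R) ->
  forall a b, arc i k a -> arc i k b -> P a -> P b.
Proof.
move=> step.
have arc_offset t : t < minn k 6 -> arc i k (i + t%:R)%R.
  by rewrite leq_min => /andP[tk t6]; rewrite arc_addr Zp_nat /= modn_small.
have P_offset t : t < minn k 6 -> P (i + t%:R)%R <-> P i.
  elim: t => [|t IH] t_lt; first by rewrite addr0.
  rewrite -(IH (ltnW t_lt)) mulrSr addrA; symmetry.
  by apply: step; [apply: arc_offset (ltnW t_lt) | rewrite -addrA -mulrSr; apply: arc_offset].
have offsetP a : arc i k a -> P a <-> P i.
  rewrite arcE => a_in; have <- : (i + (val (a - i)%R)%:R)%R = a by rewrite natr_Zp addrC subrK.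
  by apply: P_offset; rewrite leq_min a_in ltn_ord.
by move=> a b /offsetP Pa /offsetP Pb /Pa /Pb.
Qed.

Lemma arcC (i k j : 'I_6) : 0 < k -> ~~ arc i k j = arc (i + k)%R (6 - k) j.
Proof.
have : all (fun i => all (fun k : 'I_6 => all (fun j : 'I_6 =>
          (0 < k) ==> (~~ arc i k j == arc (i + k)%R (6 - k) j)) dirs) dirs) dirs.
  by vm_compute.
by move=> /dirs_allP/(_ i)/dirs_allP/(_ k)/dirs_allP/(_ j)/implyP H /H /eqP.
Qed.

Lemma arc_maximal (i k i' : 'I_6) (k' : nat) : 0 < k -> 0 < k' <= 6 ->
  {subset arc i k <= arc i' k'} -> ~~ arc i' k' (i - 1)%R -> ~~ arc i' k' (i + k)%R ->
  arc i' k' =1 arc i k.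
Proof.
move=> k_gt0 /andP[k'_gt0 k'_le6] sub not_pred not_next j.
have : all (fun i => all (fun k : 'I_6 => all (fun i' => all (fun k' : nat =>
          [&& 0 < k, all (fun j => arc i k j ==> arc i' k' j) dirs,
              ~~ arc i' k' (i - 1)%R & ~~ arc i' k' (i + k)%R] ==>
          all (fun j => arc i' k' j == arc i k j) dirs)
        (iota 1 6)) dirs) dirs) dirs.
  by vm_compute.
have k'_in : k' \in iota 1 6 by rewrite mem_iota k'_gt0 ltnS.
have sub' : all (fun j => arc i k j ==> arc i' k' j) dirs.
  by apply/dirs_allP => d; apply/implyP/sub.
move=> /dirs_allP/(_ i)/dirs_allP/(_ k)/dirs_allP/(_ i')/allP/(_ k' k'_in).
by rewrite k_gt0 sub' not_pred not_next => /dirs_allP/(_ j)/eqP.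
Qed.

Definition adjacent (d e : 'I_6) : bool := (e == d + 1)%R || (d == e + 1)%R.

Definition closed_in (o Q : pred 'I_6) : bool :=
  all (fun d => all (fun e => Q d ==> o e ==> adjacent d e ==> Q e) dirs) dirs.

Lemma closed_inP (o Q : pred 'I_6) :
  reflect (forall d e, Q d -> o e -> adjacent d e -> Q e) (closed_in o Q).
Proof.
apply: (iffP (dirs_allP _)) => [cl d e Qd oe de | cl d].
  by move/dirs_allP: (cl d) => /(_ e); rewrite Qd oe de.
by apply/dirs_allP => e; apply/implyP => Qd; apply/implyP => oe; apply/implyP; apply: cl.
Qed.

Definition single_gap (o : pred 'I_6) : bool :=
  has (fun i => has (fun k : 'I_6 => (0 < k) && all (fun j => arc i k j == ~~ o j) dirs) dirs) dirs.

Lemma single_gapP (o : pred 'I_6) :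
  reflect (exists i (k : 'I_6), 0 < k /\ forall j, arc i k j = ~~ o j) (single_gap o).
Proof.
apply: (iffP (dirs_hasP _)) => [[i /dirs_hasP[k /andP[k_gt0 /dirs_allP E]]] | [i [k [k_gt0 E]]]].
  by exists i, k; split=> // j; exact: eqP (E j).
by exists i; apply/dirs_hasP; exists k; rewrite k_gt0; apply/dirs_allP => j; rewrite E.
Qed.

Definition gap_run (o : pred 'I_6) (i k : 'I_6) : bool :=
  [&& 0 < k, all (fun j => arc i k j ==> ~~ o j) dirs, o (i - 1)%R & o (i + k)%R].

Lemma not_single_gap_split (o : pred 'I_6) :
  (exists d, o d) -> (exists d, ~~ o d) -> ~~ single_gap o ->
  exists c (m : 'I_6) a b, [/\ o a, o b, arc c m a, ~~ arc c m b & closed_in o (arc c m)].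
Proof.
move=> /dirs_hasP occ /dirs_hasP free no_gap.
suff /dirs_hasP[c /dirs_hasP[m /and3P[/dirs_hasP[a /andP[oa a_in]]
                                        /dirs_hasP[b /andP[ob b_out]] cl]]] :
  has (fun c => has (fun m : 'I_6 =>
    [&& has (fun a => o a && arc c m a) dirs, has (fun b => o b && ~~ arc c m b) dirs
      & closed_in o (arc c m)]) dirs) dirs.
  by exists c, m, a, b.
by move: o occ free no_gap; apply: pred6_ind; do 6!case; vm_compute.
Qed.

Lemma not_single_gap_runs (o : pred 'I_6) :
  (exists d, o d) -> (exists d, ~~ o d) -> ~~ single_gap o ->
  exists i k i' k', [/\ gap_run o i k, gap_run o i' k' & ~~ arc i' k' i].
Proof.
move=> /dirs_hasP occ /dirs_hasP free no_gap.
suff /dirs_hasP[i /dirs_hasP[k /andP[run /dirs_hasP[i' /dirs_hasP[k' /andP[run' i_out]]]]]] :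
  has (fun i => has (fun k => gap_run o i k &&
    has (fun i' => has (fun k' => gap_run o i' k' && ~~ arc i' k' i) dirs) dirs) dirs) dirs.
  by exists i, k, i', k'.
by move: o occ free no_gap; apply: pred6_ind; do 6!case; vm_compute.
Qed.

Lemma nbE (p : point) d : nb p d = (p + dir d)%R.
Proof. by []. Qed.

Lemma dir_inj : injective dir.
Proof.
move=> d e /eqP; have : all (fun d => all (fun e => (dir d == dir e) ==> (d == e)) dirs) dirs.
  by vm_compute.
by move=> /dirs_allP/(_ d)/dirs_allP/(_ e)/implyP de /de/eqP.
Qed.

Lemma nb_inj p : injective (nb p).
Proof. by move=> d e; rewrite !nbE => /addrI/dir_inj. Qed.

Lemma adj_nb p d : adj p (nb p d).
Proof. by apply/existsP; exists d. Qed.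

Lemma adjP p q : adj p q -> exists d, q = nb p d.
Proof. by case/existsP=> d /eqP ->; exists d. Qed.

Lemma adj_nb_nb p d e : adj (nb p d) (nb p e) = adjacent d e.
Proof.
have : all (fun d => all (fun e =>
          has (fun d' => dir e == (dir d + dir d')%R) dirs == adjacent d e) dirs) dirs.
  by vm_compute.
move=> /dirs_allP/(_ d)/dirs_allP/(_ e)/eqP <-.
apply/existsP/dirs_hasP => -[d' E]; exists d'; move: E.
  by rewrite !nbE -addrA (inj_eq (addrI p)).
by rewrite !nbE -addrA (inj_eq (addrI p)).
Qed.

Lemma gpath_refl (P : pred point) x : P x -> gpath P x x.
Proof. by move=> Px; exists [::]; rewrite /= Px. Qed.

Lemma gpath_adj (P : pred point) x y : P x -> P y -> adj x y -> gpath P x y.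
Proof. by move=> Px Py xy; exists [:: y]; rewrite /= Px Py xy. Qed.

Lemma gpath_trans (P : pred point) x y z : gpath P x y -> gpath P y z -> gpath P x z.
Proof.
case=> s1 [p1 l1 a1] [s2 [p2 l2 /andP[_ a2]]]; exists (s1 ++ s2).
by rewrite cat_path last_cat l1 p1 p2 l2 -cat_cons all_cat a1.
Qed.

Lemma gpath_closed (P Q : pred point) x y :
  (forall z z', P z' -> Q z -> adj z z' -> Q z') -> gpath P x y -> Q x -> Q y.
Proof.
move=> cl [s [+ <- /andP[_]]]; elim: s x => [|z s IH] x //= /andP[xz xs] /andP[Pz Ps] Qx.
exact: IH xs Ps (cl x z Pz Qx xz).
Qed.

Lemma in_outer_face_adj S q q' :
  in_outer_face S q -> q' \notin S -> adj q' q -> in_outer_face S q'.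
Proof.
case=> qS far q'S q'q; split=> // N; have [r [Nr qr]] := far N.
by exists r; split=> //; exact: gpath_trans (gpath_adj (P := fun z => z \notin S) q'S qS q'q) qr.
Qed.

Section Neighbourhood.
Variables (S : {fset point}) (v : point).

Definition occupied : pred 'I_6 := fun d => nb v d \in S.

Lemma mem_nbhd d : (nb v d \in nbhd S v) = occupied d.
Proof. by rewrite /nbhd !inE adj_nb andbT. Qed.

Lemma nbhd_nb q : q \in nbhd S v -> exists2 d, q = nb v d & occupied d.
Proof.
by rewrite /nbhd !inE => /andP[qS /adjP[d qd]]; exists d; rewrite // /occupied -qd.
Qed.

Lemma exists_occupied :
  connected_set S -> 2 <= #|` S| -> v \in S -> exists d, occupied d.
Proof.
move=> S_conn S_size vS.
have /fset0Pn[y] : S `\ v != fset0.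
  by apply/eqP => S_v; move: S_size; rewrite (cardfsD1 v) vS S_v cardfs0.
rewrite !inE => /andP[y_v yS].
have [[|x s] [/= path_s last_s all_s]] := S_conn v y vS yS.
  by rewrite -last_s eqxx in y_v.
case/andP: path_s => /adjP[d xd] _; exists d.
by case/and3P: all_s => _ + _; rewrite /occupied -xd.
Qed.

Lemma nbhd_connected_arc c m : (forall d, occupied d = arc c m d) -> connected_set (nbhd S v).
Proof.
move=> occE _ _ /nbhd_nb[a -> a_occ] /nbhd_nb[b -> b_occ].
apply: (@arc_ind (fun d => gpath (fun z => z \in nbhd S v) (nb v a) (nb v d)) c m _ a b);
  rewrite -?occE //; last by apply: gpath_refl; rewrite mem_nbhd.
move=> d; rewrite -!occE => d_occ d1_occ.
split=> path_d; apply: gpath_trans path_d _; apply: gpath_adj;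
  by rewrite ?mem_nbhd ?adj_nb_nb /adjacent ?eqxx ?orbT.
Qed.

Lemma nbhd_disconnected (Q : pred 'I_6) a b :
  closed_in occupied Q -> occupied a -> occupied b -> Q a -> ~~ Q b ->
  ~ connected_set (nbhd S v).
Proof.
move=> /closed_inP cl a_occ b_occ Qa Qb conn.
have path_ab := conn _ _ (etrans (mem_nbhd a) a_occ) (etrans (mem_nbhd b) b_occ).
pose onQ z := [exists d, (z == nb v d) && Q d].
have /existsP[d /andP[/eqP/nb_inj <- Qd]] : onQ (nb v b).
  apply: (gpath_closed (Q := onQ)) path_ab _; last by apply/existsP; exists a; rewrite eqxx.
  move=> z z' /nbhd_nb[e -> e_occ] /existsP[d /andP[/eqP -> Qd]] de.
  by apply/existsP; exists e; rewrite eqxx (cl d e) // -(adj_nb_nb v).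
by rewrite Qd in Qb.
Qed.

Lemma outer_face_arc i k a b : (forall d, arc i k d -> ~~ occupied d) ->
  arc i k a -> arc i k b -> in_outer_face S (nb v a) -> in_outer_face S (nb v b).
Proof.
move=> free; apply: (arc_ind (P := fun d => in_outer_face S (nb v d))) => d d_in d1_in.
by split=> outer; apply: in_outer_face_adj outer _ _;
  rewrite ?free // adj_nb_nb /adjacent eqxx ?orbT.
Qed.

Lemma local_boundary_gap_run i k :
  gap_run occupied i k -> local_boundary S v [set j | arc i k j].
Proof.
case/and4P=> k_gt0 /dirs_allP free pred_occ next_occ; split.
- by exists i, k; rewrite k_gt0 ltnW.
- by move=> d; rewrite inE; apply/implyP/free.
move=> _ [i' [k' [k'_range ->]]] sub free'.
apply/setP => j; rewrite !inE; apply: arc_maximal => //.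
- by move=> d d_in; move/subsetP: sub => /(_ d); rewrite !inE; apply.
- by apply: contraL pred_occ => pred_in; apply: free'; rewrite inE.
- by apply: contraL next_occ => next_in; apply: free'; rewrite inE.
Qed.

Lemma local_boundary_single_gap i (k : 'I_6) :
  0 < k -> (forall j, arc i k j = ~~ occupied j) ->
  local_boundary S v [set j | arc i k j] /\
  forall B, local_boundary S v B -> B = [set j | arc i k j].
Proof.
move=> k_gt0 freeE.
have lb : local_boundary S v [set j | arc i k j].
  apply: local_boundary_gap_run; apply/and4P; split=> //.
  - by apply/dirs_allP => j; rewrite freeE implybb.
  - by rewrite -[occupied _]negbK -freeE arc_addr -leqNgt -ltnS ltn_ord.
  - by rewrite -[occupied _]negbK -freeE arc_addr ltnn.
split=> // B [_ B_free B_max]; symmetry; case: lb => lb_int lb_free _.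
apply: B_max => //; apply/subsetP => d /B_free; rewrite inE freeE; exact.
Qed.

Lemma connected_nbhdP :
  (exists d, occupied d) -> (exists d, ~~ occupied d) ->
  connected_set (nbhd S v) <-> single_gap occupied.
Proof.
move=> occ free; split=> [conn | /single_gapP[i [k [k_gt0 freeE]]]].
  apply: contraT => no_gap.
  have [c [m [a [b [a_occ b_occ a_in b_out cl]]]]] := not_single_gap_split occ free no_gap.
  by case: (nbhd_disconnected cl a_occ b_occ a_in b_out conn).
by apply: (@nbhd_connected_arc (i + k)%R (6 - k)) => d; rewrite -arcC // freeE negbK.
Qed.

Lemma single_gap_of_unique_local_boundary :
  (exists d, occupied d) -> (exists d, ~~ occupied d) ->
  (forall B B', local_boundary S v B -> local_boundary S v B' -> B = B') ->
  single_gap occupied.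
Proof.
move=> occ free lb_unique; apply: contraT => no_gap.
have [i [k [i' [k' [run run' i_out]]]]] := not_single_gap_runs occ free no_gap.
have /setP/(_ i) := lb_unique _ _ (local_boundary_gap_run run) (local_boundary_gap_run run').
by rewrite !inE (negbTE i_out) arc_start; case/and4P: run => ->.
Qed.

End Neighbourhood.

Theorem proposition2p2 (S : {fset point}) (v : point) :
  connected_set S -> (2 <= #|` S|)%N -> v \in S ->
  (erodable S v <->
   exists B : {set 'I_6},
     local_boundary S v B /\
     (forall B', local_boundary S v B' -> B' = B) /\
     local_outer_boundary S v B).
Proof.
move=> S_conn S_size vS; have occ := exists_occupied S_conn S_size vS.
split.
- case=> -[_ nbhd_conn] [_ [d0 d0_outer]].
  have d0_free : ~~ occupied S v d0 by case: d0_outer.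
  have /single_gapP[i [k [k_gt0 freeE]]] :=
    (connected_nbhdP occ (ex_intro _ d0 d0_free)).1 nbhd_conn.
  have [lb lb_unique] := local_boundary_single_gap k_gt0 freeE.
  exists [set j | arc i k j]; do 3!split=> //; move=> d; rewrite inE => d_in.
  by apply: (outer_face_arc _ _ d_in d0_outer) => [j|]; rewrite freeE.
- case=> B [lb [B_unique [_ B_outer]]].
  have [[i0 [k0 [/andP[k0_gt0 _] B_def]]] B_free _] := lb.
  have i0B : i0 \in B by rewrite B_def inE -/(arc i0 k0 i0) arc_start.
  have free : exists d, ~~ occupied S v d by exists i0; apply: B_free.
  split; split=> //; last by exists i0; apply: B_outer.
  apply/(connected_nbhdP occ free)/(single_gap_of_unique_local_boundary occ free).
  by move=> B1 B2 /B_unique -> /B_unique ->.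
Qed.
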